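(* Let $(V,e)$ be a unital $\ast$-normed space and $\varepsilon>1/\|e\|$. Then $\|v\|_\varepsilon=\sup\{|\langle v,\varphi\rangle|:\varphi\in S_\varepsilon\}$, where $S_\varepsilon=V_{he}^\ast\cap\varepsilon\operatorname{ball}V^\ast$, defines a norm on $V$ equivalent to the original norm of $V$.
   Context: A $\ast$-normed space is a complex vector space with involution and norm satisfying $\|v^\ast\|=\|v\|$; $V^\ast$ has involution $\langle v,\varphi^\ast\rangle=\overline{\langle v^\ast,\varphi\rangle}$, $V_h^\ast$ is the set of hermitian bounded functionals, and for nonzero hermitian $e$, $V_{he}^\ast=\{y\in V_h^\ast:\langle e,y\rangle=1\}$. $(V,e)$ is a unital $\ast$-normed space if $V_{he}^\ast\cap\operatorname{ball}V^\ast\ne\varnothing$. *)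

From HB Require Import structures.
From mathcomp Require Import all_boot all_order all_algebra.
From mathcomp Require Import complex.
From mathcomp Require Import classical_sets reals.
Set Implicit Arguments.
Unset Strict Implicit.
Unset Printing Implicit Defensive.
Import Order.TTheory GRing.Theory Num.Theory.
Local Open Scope ring_scope.
Local Open Scope classical_set_scope.

Definition cmod (R : realType) (z : R[i]) : R := ComplexField.Normc.normc z.

Definition is_star_normed (R : realType) (V : lmodType R[i])
    (inv : V -> V) (nrm : V -> R) : Prop :=
  [/\ (forall v w : V, inv (v + w) = inv v + inv w),
      (forall (a : R[i]) (v : V), inv (a *: v) = Num.conj a *: inv v) &
      (forall v : V, inv (inv v) = v)] /\
  [/\ (forall v w : V, nrm (v + w) <= nrm v + nrm w),
      (forall (a : R[i]) (v : V), nrm (a *: v) = cmod a * nrm v),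
      (forall v : V, nrm v = 0 -> v = 0) &
      (forall v : V, nrm (inv v) = nrm v)].

Definition clinear (R : realType) (V : lmodType R[i]) (phi : V -> R[i]) : Prop :=
  forall (a : R[i]) (v w : V), phi (a *: v + w) = a * phi v + phi w.

Definition in_dual_ball (R : realType) (V : lmodType R[i]) (nrm : V -> R)
    (r : R) (phi : V -> R[i]) : Prop :=
  forall v : V, cmod (phi v) <= r * nrm v.

Definition bounded_functional (R : realType) (V : lmodType R[i]) (nrm : V -> R)
    (phi : V -> R[i]) : Prop :=
  clinear phi /\ exists M : R, in_dual_ball nrm M phi.

(* phi^* = phi, where <v, phi^*> = conj <v^*, phi> *)
Definition hermitian_functional (R : realType) (V : lmodType R[i]) (inv : V -> V)
    (phi : V -> R[i]) : Prop :=
  forall v : V, Num.conj (phi (inv v)) = phi v.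

Definition Vhe (R : realType) (V : lmodType R[i]) (inv : V -> V) (nrm : V -> R)
    (e : V) : set (V -> R[i]) :=
  [set phi | bounded_functional nrm phi /\ hermitian_functional inv phi /\ phi e = 1].

Definition S_eps (R : realType) (V : lmodType R[i]) (inv : V -> V) (nrm : V -> R)
    (e : V) (eps : R) : set (V -> R[i]) :=
  Vhe inv nrm e `&` in_dual_ball nrm eps.

Definition unital (R : realType) (V : lmodType R[i]) (inv : V -> V) (nrm : V -> R)
    (e : V) : Prop :=
  [/\ e != 0, inv e = e & S_eps inv nrm e 1 !=set0].

Definition eps_norm (R : realType) (V : lmodType R[i]) (inv : V -> V) (nrm : V -> R)
    (e : V) (eps : R) (v : V) : R :=
  sup [set cmod (phi v) | phi in S_eps inv nrm e eps].

From HB Require Import structures.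
From mathcomp Require Import all_boot all_order all_algebra.
From mathcomp Require Import complex.
From mathcomp Require Import boolp classical_sets reals.
From mathcomp Require Import ring lra.

(* The functionals of S_eps are linear and bounded by eps, so ||.||_eps is a
   seminorm below eps ||.||; the content is the lower bound.  Hahn-Banach (by
   Zorn's lemma on dominated graphs, then symmetrised under the involution and
   complexified) gives, for every hermitian x, a hermitian functional psi of norm
   at most 1 with psi x = ||x||; normalising the one for x = e yields phi1 in
   S_(1/||e||).  As eps > 1/||e||, the perturbation
   phi1 + t (psi - psi(e) phi1) with t = (eps - 1/||e||)/2 still lies in S_eps,
   whence t |psi v| <= (2 + t ||e||) ||v||_eps.  Finally v = h + i k with h, k
   hermitian and |psi h|, |psi k| <= |psi v| for hermitian psi; taking x the
   larger of h, k gives t ||v|| <= 2 (2 + t ||e||) ||v||_eps. *)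

Set Implicit Arguments.
Unset Strict Implicit.
Unset Printing Implicit Defensive.
Import Order.TTheory GRing.Theory Num.Theory.
Local Open Scope ring_scope.
Local Open Scope classical_set_scope.

Section ComplexModulus.
Variable R : realType.
Local Open Scope complex_scope.
Implicit Types (z w : R[i]) (r : R).

Lemma cmod0 : cmod (0 : R[i]) = 0.
Proof. by rewrite /cmod /= expr0n addr0 sqrtr0. Qed.

Lemma cmod1 : cmod (1 : R[i]) = 1.
Proof. by rewrite /cmod /= expr0n expr1n addr0 sqrtr1. Qed.

Lemma cmod_ge0 z : 0 <= cmod z.
Proof. by case: z => a b; rewrite /cmod /= sqrtr_ge0. Qed.

Lemma cmod_eq0 z : cmod z = 0 -> z = 0.
Proof. exact: ComplexField.Normc.eq0_normc. Qed.

Lemma cmod_gt0 z : (0 < cmod z) = (z != 0).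
Proof.
apply/idP/idP => [|z_neq0]; first by apply: contraTneq => ->; rewrite cmod0 ltxx.
by rewrite lt_neqAle cmod_ge0 andbT eq_sym; apply: contra_neq z_neq0; apply: cmod_eq0.
Qed.

Lemma cmodD z w : cmod (z + w) <= cmod z + cmod w.
Proof. exact: le_normcD. Qed.

Lemma cmodN z : cmod (- z) = cmod z.
Proof. exact: normcN. Qed.

Lemma cmodM z w : cmod (z * w) = cmod z * cmod w.
Proof. exact: ComplexField.Normc.normcM. Qed.

Lemma cmodV z : cmod z^-1 = (cmod z)^-1.
Proof. exact: ComplexField.Normc.normcV. Qed.

Lemma cmodR r : cmod r%:C = `|r|.
Proof. by rewrite /cmod /= expr0n /= addr0 sqrtr_sqr. Qed.

Lemma cmodi : cmod 'i%C = 1 :> R.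
Proof. by rewrite /cmod /= expr0n expr1n add0r sqrtr1. Qed.

Lemma cmod_conj z : cmod z^* = cmod z.
Proof. by case: z => a b; rewrite /cmod /= sqrrN. Qed.

Lemma cmod_ge_Re z : `|complex.Re z| <= cmod z.
Proof.
case: z => a b; rewrite /cmod /= -sqrtr_sqr ler_sqrt ?addr_ge0 ?sqr_ge0 //.
by rewrite lerDl sqr_ge0.
Qed.

Lemma cmod_ge_Im z : `|complex.Im z| <= cmod z.
Proof.
case: z => a b; rewrite /cmod /= -sqrtr_sqr ler_sqrt ?addr_ge0 ?sqr_ge0 //.
by rewrite lerDr sqr_ge0.
Qed.

Lemma conjC_real r : Num.conj r%:C = r%:C.
Proof. by apply/eqP; rewrite eq_complex /= oppr0 !eqxx. Qed.

Lemma conjC_i : Num.conj 'i%C = - 'i%C :> R[i].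
Proof. by apply/eqP; rewrite eq_complex /= oppr0 !eqxx. Qed.

Lemma mulJc_cmod z : z^* * z = ((cmod z) ^+ 2)%:C.
Proof.
case: z => a b; rewrite /cmod /= sqr_sqrtr ?addr_ge0 ?sqr_ge0 //.
by apply/eqP; rewrite eq_complex /=; apply/andP; split; apply/eqP; ring.
Qed.

Lemma cmod_rotation z : exists u, cmod u = 1 /\ u * z = (cmod z)%:C.
Proof.
have [->|z_neq0] := eqVneq z 0.
  by exists 1; rewrite mulr0 cmod0 cmod1.
have cz_gt0 : 0 < cmod z by rewrite cmod_gt0.
exists (z^* / (cmod z)%:C); split.
  by rewrite cmodM cmodV cmodR gtr0_norm // cmod_conj mulfV ?gt_eqF.
rewrite mulrAC mulJc_cmod -rmorphV ?unitfE ?gt_eqF // -rmorphM.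
by rewrite expr2 mulrK // unitfE gt_eqF.
Qed.

End ComplexModulus.

Section Functionals.
Variables (R : realType) (V : lmodType R[i]).
Local Open Scope complex_scope.

Section ComplexLinearFunctional.
Variable phi : V -> R[i].
Hypothesis phi_lin : clinear phi.

Lemma clinearD v w : phi (v + w) = phi v + phi w.
Proof. by rewrite -{1}(scale1r v) phi_lin mul1r. Qed.

Lemma clinear0 : phi 0 = 0.
Proof. by apply: (addrI (phi 0)); rewrite -clinearD !addr0. Qed.

Lemma clinearZ a v : phi (a *: v) = a * phi v.
Proof. by rewrite -(addr0 (a *: v)) phi_lin clinear0 addr0. Qed.

Lemma clinearN v : phi (- v) = - phi v.
Proof. by rewrite -scaleN1r clinearZ mulN1r. Qed.

End ComplexLinearFunctional.

Section RealHahnBanach.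

Definition real_linear (f : V -> R) : Prop :=
  (forall v w, f (v + w) = f v + f w) /\ (forall (r : R) v, f (r%:C *: v) = r * f v).

Lemma real_linearN f : real_linear f -> forall v, f (- v) = - f v.
Proof. by case=> _ fZ v; rewrite -scaleN1r -(rmorphN1 (real_complex R)) fZ mulN1r. Qed.

Variable p : V -> R.
Hypothesis pD : forall v w, p (v + w) <= p v + p w.
Hypothesis pZ : forall (r : R) v, 0 <= r -> p (r%:C *: v) = r * p v.

Lemma sublinear0 : p 0 = 0.
Proof. by have := @pZ 0 0 (lexx 0); rewrite rmorph0 scale0r mul0r. Qed.

Lemma sublinearN_ge0 v : 0 <= p v + p (- v).
Proof. by have := pD v (- v); rewrite subrr sublinear0. Qed.

(* Partial real-linear functionals below p, encoded by their graphs so that a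
   chain of them is bounded by its union. *)
Definition dominated_graph (G : set (V * R)) : Prop :=
  [/\ forall v a w b, G (v, a) -> G (w, b) -> G (v + w, a + b),
      forall (r : R) v a, G (v, a) -> G (r%:C *: v, r * a) &
      forall v a, G (v, a) -> a <= p v].

Lemma dominated_graph_functional G :
  dominated_graph G -> forall v a b, G (v, a) -> G (v, b) -> a = b.
Proof.
case=> GD GZ Gp v a b Ga Gb.
have := Gp _ _ (GD _ _ _ _ Ga (GZ (-1) _ _ Gb)).
have := Gp _ _ (GD _ _ _ _ Gb (GZ (-1) _ _ Ga)).
rewrite rmorphN1 scaleN1r subrr sublinear0; lra.
Qed.

Lemma dominated_graph_bigcup (F : set (set (V * R))) :
  F `<=` dominated_graph -> total_on F subset ->
  dominated_graph (\bigcup_(G in F) G).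
Proof.
move=> Fdom Ftot; split.
- move=> v a w b [G FG Ga] [H FH Hb]; have [GH|HG] := Ftot _ _ FG FH.
  + by case: (Fdom _ FH) => HD _ _; exists H => //; apply: HD (GH _ Ga) Hb.
  + by case: (Fdom _ FG) => GD _ _; exists G => //; apply: GD Ga (HG _ Hb).
- by move=> r v a [G FG Ga]; case: (Fdom _ FG) => _ GZ _; exists G => //; apply: GZ.
- by move=> v a [G FG Ga]; case: (Fdom _ FG) => _ _ Gp; apply: Gp Ga.
Qed.

Definition graph_extension (G : set (V * R)) (y : V) (c : R) : set (V * R) :=
  [set q | exists d a (t : R), G (d, a) /\ q = (d + t%:C *: y, a + t * c)].

Definition extension_admissible (G : set (V * R)) (y : V) (c : R) : Prop :=
  forall d a, G (d, a) -> a - p (d - y) <= c /\ c <= p (d + y) - a.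

Lemma sub_graph_extension G y c : G `<=` graph_extension G y c.
Proof. by move=> [d a] Ga; exists d, a, 0; rewrite rmorph0 scale0r addr0 mul0r addr0. Qed.

Lemma graph_extension_point G y c : G (0, 0) -> graph_extension G y c (y, c).
Proof. by exists 0, 0, 1; rewrite rmorph1 scale1r add0r mul1r add0r. Qed.

Lemma exists_extension_admissible G y :
  dominated_graph G -> G (0, 0) -> exists c, extension_admissible G y c.
Proof.
case=> GD _ Gp G00.
have sep d a d' a' : G (d, a) -> G (d', a') -> a - p (d - y) <= p (d' + y) - a'.
  move=> Ga Ga'; have := Gp _ _ (GD _ _ _ _ Ga Ga'); have := pD (d - y) (d' + y).
  by rewrite addrCA subrK addrC; lra.
pose L := [set z | exists d a, G (d, a) /\ z = a - p (d - y)].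
have supL : has_sup L.
  split; first by exists (0 - p (0 - y)), 0, 0.
  by exists (p (0 + y) - 0) => _ [d [a [Ga ->]]]; apply: sep Ga G00.
exists (sup L) => d a Ga; split; first by apply: sup_upper_bound => //; exists d, a.
by apply: ge_sup; [case: supL | move=> _ [d' [a' [Ga' ->]]]; apply: sep Ga' Ga].
Qed.

Lemma dominated_graph_extension G y c :
  dominated_graph G -> extension_admissible G y c ->
  dominated_graph (graph_extension G y c).
Proof.
move=> [GD GZ Gp] adm; split.
- move=> v a w b [d [a1 [t [Ga [-> ->]]]]] [d' [a2 [t' [Ga' [-> ->]]]]].
  exists (d + d'), (a1 + a2), (t + t'); split; first exact: GD.
  by rewrite rmorphD scalerDl addrACA; congr (_, _); ring.
- move=> r v a [d [a1 [t [Ga [-> ->]]]]].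
  exists (r%:C *: d), (r * a1), (r * t); split; first exact: GZ.
  by rewrite scalerDr scalerA -rmorphM; congr (_, _); ring.
- move=> v a [d [a1 [t [Ga [-> ->]]]]].
  have [t_gt0|t_lt0|->] := ltrgt0P t.
  + have [_ le_c] := adm _ _ (GZ t^-1 _ _ Ga).
    have -> : d + t%:C *: y = t%:C *: (t^-1%:C *: d + y).
      by rewrite scalerDr scalerA -rmorphM mulfV ?gt_eqF // rmorph1 scale1r.
    rewrite (pZ _ (ltW t_gt0)); have := ler_wpM2l (ltW t_gt0) le_c.
    by rewrite mulrBr mulrA mulfV ?gt_eqF // mul1r; lra.
  + have s_gt0 : 0 < - t by rewrite oppr_gt0.
    have [c_le _] := adm _ _ (GZ (- t)^-1 _ _ Ga).
    have -> : d + t%:C *: y = (- t)%:C *: ((- t)^-1%:C *: d - y).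
      rewrite scalerBr scalerA -rmorphM mulfV ?gt_eqF // rmorph1 scale1r.
      by rewrite rmorphN scaleNr opprK.
    rewrite (pZ _ (ltW s_gt0)); have := ler_wpM2l (ltW s_gt0) c_le.
    by rewrite mulrBr mulrA mulfV ?gt_eqF // mul1r; lra.
  + by rewrite rmorph0 scale0r addr0 mul0r addr0; apply: Gp.
Qed.

Lemma exists_maximal_dominated_graph G0 : dominated_graph G0 -> G0 !=set0 ->
  exists A, [/\ dominated_graph A, G0 `<=` A &
    forall B, A `<=` B -> dominated_graph B -> B `<=` A].
Proof.
move=> G0_dom [q0 G0q0].
pose P := [set G | dominated_graph G /\ (G = set0 \/ G0 `<=` G)].
have [A [[A_dom A_G0] A_max]] : exists A, P A /\ forall B, A `<` B -> ~ P B.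
  apply: Zorn_bigcup => F FP Ftot; split.
    by apply: dominated_graph_bigcup => // G /FP[].
  have [[G FG G0G]|noG0] := pselect (exists2 G, F G & G0 `<=` G).
    by right => q G0q; exists G => //; apply: G0G.
  left; apply/seteqP; split => // q [G FG Gq].
  case: (FP _ FG) => _ [G_eq0|G0G]; first by rewrite G_eq0 in Gq.
  by case: noG0; exists G.
have G0A : G0 `<=` A.
  case: A_G0 => // A_eq0; exfalso; apply: (A_max G0); last by split; [|right].
  by rewrite A_eq0; split => // /(_ _ G0q0).
exists A; split => // B AB B_dom; apply: contrapT => BA.
by apply: (A_max B); split => //; right; apply: subset_trans AB.
Qed.

Lemma maximal_dominated_graph_total A :
  dominated_graph A -> A (0, 0) ->
  (forall B, A `<=` B -> dominated_graph B -> B `<=` A) ->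
  forall y, exists a, A (y, a).
Proof.
move=> A_dom A00 A_max y; apply: contrapT => no_a.
have [c adm] := exists_extension_admissible y A_dom A00.
apply: no_a; exists c; apply: (A_max (graph_extension A y c)).
- exact: sub_graph_extension.
- exact: dominated_graph_extension.
- exact: graph_extension_point.
Qed.

Theorem real_hahn_banach x :
  exists f, real_linear f /\ (forall v, f v <= p v) /\ f x = p x.
Proof.
pose G00 : set (V * R) := [set (0, 0)].
have G00_dom : dominated_graph G00.
  split=> [v a w b [-> ->] [-> ->] | r v a [-> ->] | v a [-> ->]].
  - by rewrite !addr0.
  - by rewrite scaler0 mulr0.
  - by rewrite sublinear0.
have G00_adm : extension_admissible G00 x (p x).
  move=> d a [-> ->]; rewrite !add0r subr0; split => //.
  by have := sublinearN_ge0 x; lra.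
pose G0 := graph_extension G00 x (p x).
have G0_00 : G0 (0, 0) by apply: sub_graph_extension.
have G0x : G0 (x, p x) by apply: graph_extension_point.
have [A [A_dom G0A A_max]] : exists A, [/\ dominated_graph A, G0 `<=` A &
    forall B, A `<=` B -> dominated_graph B -> B `<=` A].
  by apply: exists_maximal_dominated_graph; [apply: dominated_graph_extension | exists (0, 0)].
have [f Af] := choice (maximal_dominated_graph_total A_dom (G0A _ G0_00) A_max).
have A_fun := dominated_graph_functional A_dom.
case: A_dom => AD AZ Ap.
exists f; split; [split|split].
- by move=> v w; apply: A_fun (Af _) (AD _ _ _ _ (Af v) (Af w)).
- by move=> r v; apply: A_fun (Af _) (AZ _ _ _ (Af v)).
- by move=> v; apply: Ap (Af v).
- exact: A_fun (Af x) (G0A _ G0x).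
Qed.

End RealHahnBanach.

Section StarNormedSpace.
Variables (inv : V -> V) (nrm : V -> R).

Lemma hermitian_inv psi :
  hermitian_functional inv psi -> forall v, psi (inv v) = Num.conj (psi v).
Proof. by move=> psi_herm v; rewrite -(psi_herm v) conjCK. Qed.

Definition complexify (g : V -> R) (v : V) : R[i] :=
  (g v)%:C - 'i%C * (g ('i%C *: v))%:C.

Lemma Re_complexify g v : complex.Re (complexify g v) = g v.
Proof. by rewrite /=; ring. Qed.

Lemma complexify_clinear g : real_linear g -> clinear (complexify g).
Proof.
move=> g_lin; have [gD gZ] := g_lin.
have cD v w : complexify g (v + w) = complexify g v + complexify g w.
  by rewrite /complexify scalerDr !gD !rmorphD; ring.
have cR (r : R) v : complexify g (r%:C *: v) = r%:C * complexify g v.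
  rewrite /complexify.
  have -> : 'i%C *: (r%:C *: v) = r%:C *: ('i%C *: v) by rewrite !scalerA mulrC.
  by rewrite !gZ !rmorphM; ring.
have cI v : complexify g ('i%C *: v) = 'i%C * complexify g v.
  rewrite /complexify scalerA -expr2 sqr_i scaleN1r (real_linearN g_lin) rmorphN.
  by rewrite mulrBr mulrA -expr2 sqr_i; ring.
move=> a v w; rewrite {1}(complexE a) scalerDl -scalerA !cD cR cI cR.
by rewrite [in RHS](complexE a) mulrDl mulrA.
Qed.

Hypothesis hS : is_star_normed inv nrm.

Lemma nrmD v w : nrm (v + w) <= nrm v + nrm w.
Proof. by case: hS => _ [h _ _ _]; apply: h. Qed.

Lemma nrmZ a v : nrm (a *: v) = cmod a * nrm v.
Proof. by case: hS => _ [_ h _ _]; apply: h. Qed.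

Lemma nrm_eq0 v : nrm v = 0 -> v = 0.
Proof. by case: hS => _ [_ _ h _]; apply: h. Qed.

Lemma nrm_inv v : nrm (inv v) = nrm v.
Proof. by case: hS => _ [_ _ _ h]; apply: h. Qed.

Lemma invD v w : inv (v + w) = inv v + inv w.
Proof. by case: hS => [[h _ _] _]; apply: h. Qed.

Lemma invZ a v : inv (a *: v) = Num.conj a *: inv v.
Proof. by case: hS => [[_ h _] _]; apply: h. Qed.

Lemma invK v : inv (inv v) = v.
Proof. by case: hS => [[_ _ h] _]; apply: h. Qed.

Lemma invN v : inv (- v) = - inv v.
Proof. by rewrite -scaleN1r invZ rmorphN1 scaleN1r. Qed.

Lemma nrm_ge0 v : 0 <= nrm v.
Proof.
have nrm0 : nrm 0 = 0 by have := nrmZ 0 0; rewrite scale0r cmod0 mul0r.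
by have := nrmD v (- v); rewrite subrr nrm0 -scaleN1r nrmZ cmodN cmod1 mul1r; lra.
Qed.

Lemma nrm_gt0 v : (0 < nrm v) = (v != 0).
Proof.
apply/idP/idP => [|v_neq0].
  by apply: contraTneq => ->; rewrite -(scale0r 0) nrmZ cmod0 mul0r ltxx.
by rewrite lt_neqAle nrm_ge0 andbT eq_sym; apply: contra_neq v_neq0; apply: nrm_eq0.
Qed.

Lemma nrm_sublinear (r : R) v : 0 <= r -> nrm (r%:C *: v) = r * nrm v.
Proof. by move=> r_ge0; rewrite nrmZ cmodR ger0_norm. Qed.

Lemma complexify_hermitian g :
  real_linear g -> (forall v, g (inv v) = g v) -> hermitian_functional inv (complexify g).
Proof.
move=> g_lin g_inv v; rewrite /complexify rmorphB rmorphM /= !conjC_real conjC_i.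
have -> : 'i%C *: inv v = inv (- 'i%C *: v) by rewrite invZ rmorphN /= conjC_i opprK.
by rewrite !g_inv scaleNr (real_linearN g_lin) rmorphN; ring.
Qed.

Lemma clinear_cmod_le psi :
  clinear psi -> (forall v, complex.Re (psi v) <= nrm v) ->
  forall v, cmod (psi v) <= nrm v.
Proof.
move=> psi_lin Re_le v; have [u [u1 uz]] := cmod_rotation (psi v).
by have := Re_le (u *: v); rewrite clinearZ // uz nrmZ u1 mul1r.
Qed.

Theorem hermitian_hahn_banach x : inv x = x ->
  exists psi, [/\ clinear psi, hermitian_functional inv psi,
    forall v, cmod (psi v) <= nrm v & psi x = (nrm x)%:C].
Proof.
move=> x_herm; have [f [[fD fZ] [f_le fx]]] := real_hahn_banach nrmD nrm_sublinear x.
pose g v := (f v + f (inv v)) / 2.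
have g_lin : real_linear g.
  by split=> [v w | r v]; rewrite /g ?invD ?invZ ?conjC_real !(fD, fZ); ring.
have g_inv v : g (inv v) = g v by rewrite /g invK addrC.
have g_le v : g v <= nrm v.
  by rewrite /g; have := f_le v; have := f_le (inv v); rewrite nrm_inv; lra.
have g_ix : g ('i%C *: x) = 0.
  by have := g_inv ('i%C *: x); rewrite invZ conjC_i x_herm scaleNr (real_linearN g_lin); lra.
exists (complexify g); split.
- exact: complexify_clinear.
- exact: complexify_hermitian.
- by apply: clinear_cmod_le; [exact: complexify_clinear | move=> v; rewrite Re_complexify].
- by rewrite /complexify g_ix rmorph0 mulr0 subr0 /g x_herm fx; congr (_%:C); lra.
Qed.

Definition re_part v := (2^-1)%:C *: (v + inv v).
Definition im_part v := (2^-1)%:C *: (- 'i%C *: (v - inv v)).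

Lemma re_part_herm v : inv (re_part v) = re_part v.
Proof. by rewrite /re_part invZ conjC_real invD invK addrC. Qed.

Lemma im_part_herm v : inv (im_part v) = im_part v.
Proof.
rewrite /im_part invZ conjC_real invZ rmorphN /= conjC_i opprK invD invN invK.
by rewrite scaleNr -scalerN opprB.
Qed.

Lemma re_im_partE v : re_part v + 'i%C *: im_part v = v.
Proof.
rewrite /re_part /im_part !scalerA.
have -> : 'i%C * (2^-1)%:C * - 'i%C = (2^-1)%:C :> R[i].
  by rewrite mulrAC mulrN -expr2 sqr_i opprK mul1r.
rewrite -scalerDr addrACA subrr addr0 -mulr2n -scaler_nat scalerA.
have -> : (2%:R : R[i]) = (2%:R)%:C by rewrite rmorph_nat.
by rewrite -rmorphM mulVf ?pnatr_eq0 // rmorph1 scale1r.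
Qed.

Lemma clinear_re_part psi v : clinear psi -> hermitian_functional inv psi ->
  psi (re_part v) = (complex.Re (psi v))%:C.
Proof.
move=> psi_lin psi_herm; rewrite /re_part clinearZ // clinearD // hermitian_inv //.
by case: (psi v) => a b; apply/eqP; rewrite eq_complex /=; apply/andP; split; apply/eqP; lra.
Qed.

Lemma clinear_im_part psi v : clinear psi -> hermitian_functional inv psi ->
  psi (im_part v) = (complex.Im (psi v))%:C.
Proof.
move=> psi_lin psi_herm.
rewrite /im_part !clinearZ // clinearD // clinearN // hermitian_inv //.
by case: (psi v) => a b; apply/eqP; rewrite eq_complex /=; apply/andP; split; apply/eqP; lra.
Qed.

Lemma large_hermitian_part v : exists x, [/\ inv x = x, nrm v <= 2 * nrm x &
  forall psi, clinear psi -> hermitian_functional inv psi -> cmod (psi x) <= cmod (psi v)].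
Proof.
have nrm_v : nrm v <= nrm (re_part v) + nrm (im_part v).
  rewrite -{1}(re_im_partE v); apply: le_trans (nrmD _ _) _.
  by rewrite [nrm ('i%C *: _)]nrmZ cmodi mul1r.
have [le_im|le_re] := lerP (nrm (im_part v)) (nrm (re_part v)).
- exists (re_part v); split; [exact: re_part_herm | lra |].
  by move=> psi psi_lin psi_herm; rewrite clinear_re_part // cmodR cmod_ge_Re.
- exists (im_part v); split; [exact: im_part_herm | lra |].
  by move=> psi psi_lin psi_herm; rewrite clinear_im_part // cmodR cmod_ge_Im.
Qed.

Lemma S_epsP e eps phi : S_eps inv nrm e eps phi <->
  [/\ clinear phi, hermitian_functional inv phi, phi e = 1 & in_dual_ball nrm eps phi].
Proof.
split=> [[[[phi_lin _] [phi_herm phi_e]] phi_ball] | [phi_lin phi_herm phi_e phi_ball]] //.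
by do !split => //; exists eps.
Qed.

Lemma S_eps_le_subset e eps1 eps2 :
  eps1 <= eps2 -> S_eps inv nrm e eps1 `<=` S_eps inv nrm e eps2.
Proof.
move=> le_eps phi /S_epsP[phi_lin phi_herm phi_e phi_ball]; apply/S_epsP; split => // v.
by apply: le_trans (phi_ball v) _; rewrite ler_wpM2r ?nrm_ge0.
Qed.

Lemma S_eps_inv_nrm_neq0 e : inv e = e -> e != 0 -> S_eps inv nrm e (nrm e)^-1 !=set0.
Proof.
move=> e_herm e_neq0; have e_gt0 : 0 < nrm e by rewrite nrm_gt0.
have [psi [psi_lin psi_herm psi_le psi_e]] := hermitian_hahn_banach e_herm.
exists (fun v => ((nrm e)^-1)%:C * psi v); apply/S_epsP; split.
- by move=> a v w; rewrite psi_lin; ring.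
- by move=> v; rewrite rmorphM /= conjC_real psi_herm.
- by rewrite psi_e -rmorphM mulVf ?gt_eqF // rmorph1.
- by move=> v; rewrite cmodM cmodR gtr0_norm ?invr_gt0 // ler_pM2l ?invr_gt0.
Qed.

Section EpsNorm.
Variables (e : V) (eps : R).
Local Notation S := (S_eps inv nrm e eps).
Local Notation N := (eps_norm inv nrm e eps).

Lemma has_ubound_eps_norm v : has_ubound [set cmod (phi v) | phi in S].
Proof. by exists (eps * nrm v) => _ [phi /S_epsP[_ _ _ phi_ball] <-]; apply: phi_ball. Qed.

Hypotheses (e_herm : inv e = e) (e_neq0 : e != 0) (eps_gt : (nrm e)^-1 < eps).

Lemma S_eps_neq0 : S !=set0.
Proof.
have [phi S_phi] := S_eps_inv_nrm_neq0 e_herm e_neq0.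
by exists phi; exact: (S_eps_le_subset (ltW eps_gt) S_phi).
Qed.

Lemma has_sup_eps_norm v : has_sup [set cmod (phi v) | phi in S].
Proof.
split; last exact: has_ubound_eps_norm.
by have [phi S_phi] := S_eps_neq0; exists (cmod (phi v)), phi.
Qed.

Lemma le_eps_norm v phi : S phi -> cmod (phi v) <= N v.
Proof. by move=> S_phi; apply: sup_upper_bound; [exact: has_sup_eps_norm | exists phi]. Qed.

Lemma ge_eps_norm v b : (forall phi, S phi -> cmod (phi v) <= b) -> N v <= b.
Proof.
move=> le_b; apply: ge_sup; first by case: (has_sup_eps_norm v).
by move=> _ [phi S_phi <-]; apply: le_b.
Qed.

Lemma eps_norm_ge0 v : 0 <= N v.
Proof.
have [phi S_phi] := S_eps_neq0.
by apply: le_trans (le_eps_norm v S_phi); apply: cmod_ge0.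
Qed.

Lemma eps_norm_le v : N v <= eps * nrm v.
Proof. by apply: ge_eps_norm => phi /S_epsP[_ _ _]; apply. Qed.

Lemma eps_normD v w : N (v + w) <= N v + N w.
Proof.
apply: ge_eps_norm => phi S_phi; have /S_epsP[phi_lin _ _ _] := S_phi.
rewrite clinearD //; apply: le_trans (cmodD _ _) _.
by apply: lerD; apply: le_eps_norm.
Qed.

Lemma eps_normZ_le a v : N (a *: v) <= cmod a * N v.
Proof.
apply: ge_eps_norm => phi S_phi; have /S_epsP[phi_lin _ _ _] := S_phi.
by rewrite clinearZ // cmodM ler_wpM2l ?cmod_ge0 ?le_eps_norm.
Qed.

Lemma eps_normZ a v : N (a *: v) = cmod a * N v.
Proof.
apply/eqP; rewrite eq_le eps_normZ_le /=.
have [->|a_neq0] := eqVneq a 0; first by rewrite cmod0 mul0r eps_norm_ge0.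
have := eps_normZ_le a^-1 (a *: v); rewrite scalerA mulVf // scale1r cmodV.
by rewrite -ler_pdivlMl ?cmod_gt0 // mulrC.
Qed.

Lemma eps_gt0 : 0 < eps.
Proof. by apply: lt_trans eps_gt; rewrite invr_gt0 nrm_gt0. Qed.

Let t := (eps - (nrm e)^-1) / 2.

Let t_gt0 : 0 < t.
Proof. by rewrite divr_gt0 // subr_gt0. Qed.

Lemma perturbation_mem_S_eps phi1 psi :
  S_eps inv nrm e (nrm e)^-1 phi1 ->
  clinear psi -> hermitian_functional inv psi -> (forall v, cmod (psi v) <= nrm v) ->
  S (fun v => phi1 v + t%:C * (psi v - psi e * phi1 v)).
Proof.
move=> /S_epsP[phi1_lin phi1_herm phi1_e phi1_ball] psi_lin psi_herm psi_le.
have psi_e_real : Num.conj (psi e) = psi e by have := psi_herm e; rewrite e_herm.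
apply/S_epsP; split.
- by move=> a v w; rewrite phi1_lin psi_lin; ring.
- move=> v; rewrite rmorphD rmorphM /= conjC_real rmorphB /= [Num.conj (_ * _)]rmorphM /=.
  by rewrite psi_e_real phi1_herm psi_herm.
- by rewrite phi1_e mulr1 subrr mulr0 addr0.
move=> v; apply: le_trans (cmodD _ _) _; rewrite cmodM cmodR gtr0_norm //.
have e_phi1 : cmod (psi e * phi1 v) <= nrm v.
  rewrite cmodM; apply: le_trans (ler_pM (cmod_ge0 _) (cmod_ge0 _) (psi_le e) (phi1_ball v)) _.
  by rewrite mulrA mulfV ?mul1r // gt_eqF // nrm_gt0.
have diff_le : cmod (psi v - psi e * phi1 v) <= nrm v + nrm v.
  by apply: le_trans (cmodD _ _) (lerD (psi_le v) _); rewrite cmodN.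
have -> : eps * nrm v = (nrm e)^-1 * nrm v + t * (nrm v + nrm v).
  by rewrite /t; field; rewrite gt_eqF ?nrm_gt0.
exact: lerD (phi1_ball v) (ler_wpM2l (ltW t_gt0) diff_le).
Qed.

Lemma hermitian_le_eps_norm psi v :
  clinear psi -> hermitian_functional inv psi -> (forall w, cmod (psi w) <= nrm w) ->
  t * cmod (psi v) <= (2 + t * nrm e) * N v.
Proof.
move=> psi_lin psi_herm psi_le.
have [phi1 S1] := S_eps_inv_nrm_neq0 e_herm e_neq0.
have N1 := le_eps_norm v (S_eps_le_subset (ltW eps_gt) S1).
have N2 := le_eps_norm v (perturbation_mem_S_eps S1 psi_lin psi_herm psi_le).
have diff_le : t * cmod (psi v - psi e * phi1 v) <= N v + N v.
  rewrite -(gtr0_norm t_gt0) -cmodR -cmodM.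
  have -> : t%:C * (psi v - psi e * phi1 v) =
      (phi1 v + t%:C * (psi v - psi e * phi1 v)) - phi1 v by rewrite [RHS]addrC addKr.
  by apply: le_trans (cmodD _ _) (lerD N2 _); rewrite cmodN.
have psi_split : cmod (psi v) <= cmod (psi v - psi e * phi1 v) + nrm e * N v.
  have := cmodD (psi v - psi e * phi1 v) (psi e * phi1 v); rewrite subrK => /le_trans; apply.
  by rewrite lerD2l cmodM; apply: ler_pM (cmod_ge0 _) (cmod_ge0 _) (psi_le e) N1.
have := ler_wpM2l (ltW t_gt0) psi_split.
lra.
Qed.

Lemma eps_norm_lower_bound : exists2 c, 0 < c & forall v, c * nrm v <= N v.
Proof.
have D_gt0 : 0 < 2 * (2 + t * nrm e) by rewrite mulr_gt0 // addr_gt0 // mulr_gt0 // nrm_gt0.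
exists (t / (2 * (2 + t * nrm e))) => [|v]; first by rewrite divr_gt0.
have [x [x_herm le_x x_dom]] := large_hermitian_part v.
have [psi [psi_lin psi_herm psi_le psi_x]] := hermitian_hahn_banach x_herm.
have x_le : nrm x <= cmod (psi v).
  by rewrite -[nrm x]ger0_norm ?nrm_ge0 // -cmodR -psi_x; apply: x_dom.
have := hermitian_le_eps_norm v psi_lin psi_herm psi_le.
have := ler_wpM2l (ltW t_gt0) (le_trans le_x (ler_wpM2l (ler0n _ 2) x_le)).
move=> le_v le_psi; rewrite mulrAC ler_pdivrMr //; lra.
Qed.

Lemma eps_norm_eq0 v : N v = 0 -> v = 0.
Proof.
move=> Nv0; have [c c_gt0 c_le] := eps_norm_lower_bound.
apply: nrm_eq0; apply/eqP; rewrite eq_le nrm_ge0 andbT -(pmulr_rle0 _ c_gt0) -Nv0.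
exact: c_le.
Qed.

End EpsNorm.

End StarNormedSpace.

End Functionals.

Theorem corollary4p4 (R : realType) (V : lmodType R[i]) (inv : V -> V)
    (nrm : V -> R) (e : V) (eps : R) :
  is_star_normed inv nrm -> unital inv nrm e -> (nrm e)^-1 < eps ->
  (* the sup is taken over a bounded set *)
  (forall v : V, has_ubound [set cmod (phi v) | phi in S_eps inv nrm e eps]) /\
  (* ||.||_eps is a norm on V *)
  (forall v w : V, eps_norm inv nrm e eps (v + w)
                   <= eps_norm inv nrm e eps v + eps_norm inv nrm e eps w) /\
  (forall (a : R[i]) (v : V), eps_norm inv nrm e eps (a *: v)
                              = cmod a * eps_norm inv nrm e eps v) /\
  (forall v : V, eps_norm inv nrm e eps v = 0 -> v = 0) /\
  (* equivalent to the original norm *)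
  (exists c1 c2 : R, 0 < c1 /\ 0 < c2 /\
     forall v : V, c1 * nrm v <= eps_norm inv nrm e eps v
                   /\ eps_norm inv nrm e eps v <= c2 * nrm v).
Proof.
(* The element of S_1 provided by [unital] is not needed: Hahn-Banach already
   provides one of S_(1/||e||). *)
move=> hS [e_neq0 e_herm _] eps_gt.
have [c c_gt0 c_le] := eps_norm_lower_bound hS e_herm e_neq0 eps_gt.
split; first exact: has_ubound_eps_norm.
split; first exact: eps_normD.
split; first exact: eps_normZ.
split; first exact: eps_norm_eq0.
exists c, eps; split=> //; split; first exact: (eps_gt0 hS e_neq0 eps_gt).
by move=> v; split; [exact: c_le | exact: eps_norm_le].
Qed.
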